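(* Let $n\geq 3$ and let $V\subset\overline{\Pi}_n$ be the set of partitions $v_k=\{\{1,k\},\{2\},\dots,\widehat{\{k\}},\dots,\{n\}\}$, $k\in\{2,\dots,n\}$ (the block containing $1$ has exactly two elements and all other blocks are singletons). Let $F_0$ be the subposet of the face poset of $\Delta(\overline{\Pi}_n)$ consisting of all simplices having no vertex in $V$. Then there exists an $(S_1\times S_{n-1})$-equivariant acyclic matching on $F_0$ whose only critical simplex is the vertex $\alpha_n=\{\{1\},\{2,\dots,n\}\}$.
   Context: $\Pi_n$ is the poset of set partitions of $[n]$ ordered by refinement (finer is smaller); $\overline{\Pi}_n$ is obtained by removing its minimum and maximum. $\Delta(\overline{\Pi}_n)$ is the order complex: simplices are nonempty chains of $\overline{\Pi}_n$, vertices are elements of $\overline{\Pi}_n$, and the face poset is the set of simplices ordered by inclusion. $S_1\times S_{n-1}=\{\sigma\in S_n\mid \sigma(1)=1\}$ acts naturally (via its action on $[n]$). A partial matching on a poset is a set of pairs $(a,b)$ with $b$ covering $a$, each element in at most one pair; acyclic means no cycle $b_1>a_1<b_2>\dots<b_t>a_t<b_1$, $t\ge 2$, distinct $b_i$, $(a_i,b_i)$ matched; critical elements are unmatched ones; $H$-equivariant means $(a,b)$ matched implies $(ha,hb)$ matched for all $h\in H$. *)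

(* Points of [n] are 'I_n; the paper's element "1" is the
   ordinal with value 0. *)
From mathcomp Require Import all_boot fingroup perm.
Set Implicit Arguments. Unset Strict Implicit. Unset Printing Implicit Defensive.

Section Partitions.
Variable n : nat.

Definition part_t := {set {set 'I_n}}.
Definition simplex_t := {set part_t}.

Definition is_setpart (P : part_t) : bool := partition P [set: 'I_n].

Definition refines (P Q : part_t) : bool :=
  [forall B in P, exists C in Q, B \subset C].

Definition part_min : part_t := [set [set x] | x : 'I_n].
Definition part_max : part_t := [set [set: 'I_n]].

Definition proper_part (P : part_t) : bool :=
  [&& is_setpart P, P != part_min & P != part_max].

(* simplices of the order complex: nonempty chains of \overline{\Pi}_n *)
Definition is_simplex (c : simplex_t) : bool :=
  [&& c != set0, [forall P in c, proper_part P] &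
      [forall P in c, forall Q in c, refines P Q || refines Q P]].

Definition in_V (P : part_t) : Prop :=
  exists x y : 'I_n, [/\ val x = 0, x != y &
    P = [set [set x; y]] :|: [set [set z] | z in ~: [set x; y]]].

Definition is_alpha (P : part_t) : Prop :=
  exists x : 'I_n, val x = 0 /\ P = [set [set x]; ~: [set x]].

Definition in_F0 (c : simplex_t) : Prop :=
  is_simplex c /\ forall P, P \in c -> ~ in_V P.

Definition covers_F0 (a b : simplex_t) : Prop :=
  [/\ in_F0 a, in_F0 b, a \proper b &
      ~ exists c, [/\ in_F0 c, a \proper c & c \proper b]].

Definition matching_F0 (M : {set simplex_t * simplex_t}) : Prop :=
  (forall p, p \in M -> covers_F0 p.1 p.2) /\
  (forall p q, p \in M -> q \in M ->
     [set p.1; p.2] :&: [set q.1; q.2] != set0 -> p = q).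

(* acyclic: no cycle b_1 > a_1 < b_2 > a_2 < ... < b_t > a_t < b_1 with t >= 2,
   distinct b_i and (a_i,b_i) in M *)
Definition acyclic_F0 (M : {set simplex_t * simplex_t}) : Prop :=
  ~ exists s : seq (simplex_t * simplex_t),
      [/\ 2 <= size s, all (fun p => p \in M) s, uniq (map snd s) &
          forall i, i < size s ->
            (nth (set0, set0) s i).1 \proper
            (nth (set0, set0) s ((i.+1) %% size s)).2].

Definition critical_F0 (M : {set simplex_t * simplex_t}) (c : simplex_t) : Prop :=
  in_F0 c /\ forall p, p \in M -> p.1 != c /\ p.2 != c.

Definition act_part (s : {perm 'I_n}) (P : part_t) : part_t :=
  [set [set s x | x in B] | B : {set 'I_n} in P].
Definition act_simplex (s : {perm 'I_n}) (c : simplex_t) : simplex_t :=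
  [set act_part s P | P in c].

Definition in_S1Sn1 (s : {perm 'I_n}) : Prop :=
  forall i : 'I_n, val i = 0 -> s i = i.

Definition equivariant_F0 (M : {set simplex_t * simplex_t}) : Prop :=
  forall s, in_S1Sn1 s -> forall p, p \in M ->
    (act_simplex s p.1, act_simplex s p.2) \in M.

End Partitions.

From mathcomp Require Import all_boot fingroup perm.
Set Implicit Arguments. Unset Strict Implicit. Unset Printing Implicit Defensive.

(* For a partition P let [isolate P] be P with the point 1 split off into a
   singleton block: the largest partition below P in which 1 is isolated.  The
   pivot of a chain c is [isolate P] for the least vertex P of c in which 1 is
   not isolated, and alpha if there is none.  It is a proper partition outside
   V (were [isolate P] discrete, P would be an atom of V), it is comparable
   with every vertex of c, and it depends only on the vertices of c in which 1
   is not isolated, hence not on whether c contains it.  So adding or removing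
   the pivot is an involution, and it matches every chain except {alpha},
   whose partner would be empty.  Along a cycle of the matching the vertices in
   which 1 is not isolated can only accumulate, so they, the pivot, and then
   the whole cycle are constant.  Everything commutes with permutations
   fixing 1. *)

Lemma exists_least (T : finType) (r : rel T) (X : {set T}) :
  reflexive r -> transitive r -> {in X &, total r} -> X != set0 ->
  exists2 m, m \in X & {in X, forall y, r m y}.
Proof.
move=> r_refl r_tr r_tot /set0Pn[x xX].
have enumX : all [in X] (enum X) by apply/allP => y; rewrite mem_enum.
have := sort_sorted_in r_tot enumX; have := mem_sort r (enum X).
case: (sort r (enum X)) => [|m s] mem_s; first by have := mem_s x; rewrite mem_enum xX.
move=> /(order_path_min r_tr) /allP m_min.
exists m; first by rewrite -mem_enum -mem_s mem_head.
by move=> y; rewrite -mem_enum -mem_s inE => /predU1P[->|/m_min//]; apply: r_refl.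
Qed.

Lemma cyclic_subset_eq (T : finType) (f : nat -> {set T}) t :
  (forall i, i < t -> f i \subset f (i.+1 %% t)) ->
  forall i j, i < t -> j < t -> f i = f j.
Proof.
move=> f_sub.
have f_shift k i : i < t -> f i \subset f ((i + k) %% t).
  move=> it; elim: k => [|k IHk]; first by rewrite addn0 modn_small.
  apply: subset_trans IHk _.
  have -> : (i + k.+1) %% t = ((i + k) %% t).+1 %% t.
    by rewrite -(addn1 ((i + k) %% t)) modnDml addn1 addnS.
  by apply: f_sub; rewrite ltn_pmod // (leq_ltn_trans _ it).
have f_le i j : i < t -> j < t -> f i \subset f j.
  move=> it jt; have := f_shift (t - i + j) i it.
  by rewrite addnA subnKC ?(ltnW it) // -modnDml modnn add0n modn_small.
by move=> i j it jt; apply/eqP; rewrite eqEsubset !f_le.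
Qed.

Lemma imsetD1_inj (aT rT : finType) (f : aT -> rT) (A : {set aT}) a :
  injective f -> f @: (A :\ a) = f @: A :\ f a.
Proof.
move=> f_inj; apply/setP => y; rewrite !inE; apply/imsetP/andP.
  by case=> x /setD1P[xa xA] ->; rewrite (inj_eq f_inj) xa imset_f.
case=> ya /imsetP[x xA yE]; exists x => //.
by rewrite !inE xA andbT; apply: contraNneq ya => xa; rewrite yE xa.
Qed.

Lemma imset_perm_setT (T : finType) (t : {perm T}) : t @: [set: T] = [set: T].
Proof. by apply/eqP; rewrite eqEcard subsetT card_imset ?leqnn //; apply: perm_inj. Qed.

Lemma imset_perm_setC (T : finType) (t : {perm T}) (A : {set T}) : t @: (~: A) = ~: (t @: A).
Proof.
apply/setP => y; rewrite -(permKV t y) !inE !mem_imset ?inE //; apply: perm_inj.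
Qed.

Section SetPartitions.
Variable n : nat.
Implicit Types (P Q R : part_t n) (c d : simplex_t n).

Lemma setpartP P : is_setpart P <->
  [/\ set0 \notin P, forall x, exists2 B, B \in P & x \in B &
      forall B C x, B \in P -> C \in P -> x \in B -> x \in C -> B = C].
Proof.
split.
- move=> hP; have tP := partition_trivIset hP.
  split; first by rewrite (partition0 hP).
  + move=> x; exists (pblock P x); last by rewrite mem_pblock (cover_partition hP) inE.
    by apply: pblock_mem; rewrite (cover_partition hP) inE.
  + move=> B C x BP CP xB xC.
    by rewrite -(def_pblock tP BP xB) -(def_pblock tP CP xC).
- case=> P0 Pcov Puniq; rewrite /is_setpart /partition P0 andbT.
  apply/andP; split.
  + apply/eqP/setP => x; rewrite inE; apply/bigcupP.
    by have [B BP xB] := Pcov x; exists B.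
  + apply/trivIsetP => B C BP CP BC; rewrite -setI_eq0; apply/eqP/setP => x.
    rewrite !inE; apply/negP => /andP[xB xC]; move/eqP: BC; apply.
    exact: Puniq xB xC.
Qed.

Lemma refines_refl : reflexive (@refines n).
Proof. by move=> P; apply/forall_inP => B BP; apply/exists_inP; exists B. Qed.

Lemma refines_trans : transitive (@refines n).
Proof.
move=> Q P R /forall_inP PQ /forall_inP QR; apply/forall_inP => B BP.
have /exists_inP[C CQ BC] := PQ B BP; have /exists_inP[D DR CD] := QR C CQ.
by apply/exists_inP; exists D => //; apply: subset_trans CD.
Qed.

Lemma refines_subset P Q : is_setpart P -> refines Q P -> refines P Q -> P \subset Q.
Proof.
move=> /setpartP[P0 _ Puniq] /forall_inP QP /forall_inP PQ; apply/subsetP => B BP.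
have /exists_inP[C CQ BC] := PQ B BP; have /exists_inP[D DP CD] := QP C CQ.
have /set0Pn[x xB] : B != set0 by apply: contraNneq P0 => <-.
have BD : B = D by apply: (Puniq B D x) => //; apply/(subsetP CD)/(subsetP BC).
suff -> : B = C by [].
by apply/eqP; rewrite eqEsubset BC BD.
Qed.

Lemma refines_antisym P Q : is_setpart P -> is_setpart Q ->
  refines P Q -> refines Q P -> P = Q.
Proof.
by move=> hP hQ PQ QP; apply/eqP; rewrite eqEsubset !refines_subset.
Qed.

Lemma part_max_setpart : 0 < n -> is_setpart (part_max n).
Proof.
move=> n_gt0; apply/setpartP; split => [|x|B C x /set1P -> /set1P -> //].
  by rewrite inE eq_sym -card_gt0 cardsT card_ord.
by exists [set: 'I_n]; rewrite ?inE.
Qed.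

Lemma refines_max P : refines P (part_max n).
Proof. by apply/forall_inP => B _; apply/exists_inP; exists [set: 'I_n]; rewrite ?inE ?subsetT. Qed.

Lemma inV_neq_max P : 2 < n -> in_V P -> P != part_max n.
Proof.
move=> n_gt2 [x [y [_ xy ->]]]; apply/negP => /eqP PE.
have : [set x; y] \in part_max n by rewrite -PE setU11.
rewrite inE => /eqP xyT; have := cards2 x y.
by rewrite xyT cardsT card_ord xy => n2; rewrite n2 in n_gt2.
Qed.

Lemma proper_setpart P : proper_part P -> is_setpart P.
Proof. by case/and3P. Qed.

Lemma simplexP c : is_simplex c <->
  [/\ c != set0, forall P, P \in c -> proper_part P &
      forall P Q, P \in c -> Q \in c -> refines P Q || refines Q P].
Proof.
rewrite /is_simplex; split.
  case/and3P => c0 /forall_inP c_prop /forall_inP c_chain; split => // P Q Pc Qc.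
  by move: (c_chain P Pc) => /forall_inP; apply.
case=> c0 c_prop c_chain; rewrite c0 /=; apply/andP; split; apply/forall_inP => // P Pc.
by apply/forall_inP => Q Qc; apply: c_chain.
Qed.

Lemma F0_subset c d : in_F0 c -> d \subset c -> d != set0 -> in_F0 d.
Proof.
case=> /simplexP[_ c_prop c_chain] cV dc d0; split.
  apply/simplexP; split => // [P Pd|P Q Pd Qd]; first exact/c_prop/(subsetP dc).
  by apply: c_chain; apply: (subsetP dc).
by move=> P Pd; apply/cV/(subsetP dc).
Qed.

Definition in_Vb P : bool :=
  [exists x : 'I_n, exists y : 'I_n, [&& val x == 0, x != y &
    P == [set [set x; y]] :|: [set [set z] | z in ~: [set x; y]]]].

Lemma in_VP P : reflect (in_V P) (in_Vb P).
Proof.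
apply: (iffP existsP) => [[x /existsP[y /and3P[/eqP x0 xy /eqP PE]]]|[x [y [x0 xy PE]]]].
  by exists x, y.
by exists x; apply/existsP; exists y; apply/and3P; split => //; apply/eqP.
Qed.

Definition in_F0b c : bool := is_simplex c && [forall P in c, ~~ in_Vb P].

Lemma in_F0P c : reflect (in_F0 c) (in_F0b c).
Proof.
apply: (iffP andP) => [[c_simp /forall_inP cV]|[c_simp cV]]; split => //.
  by move=> P Pc /in_VP; apply/negP/cV.
by apply/forall_inP => P Pc; apply/in_VP/cV.
Qed.

Section Action.
Local Open Scope group_scope.
Implicit Type t : {perm 'I_n}.

Lemma act_partE t P : act_part t P = [set t @: (B : {set 'I_n}) | B in P].
Proof. by []. Qed.

Lemma imset_perm_inj t : injective (fun B : {set 'I_n} => t @: B).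
Proof. exact/imset_inj/perm_inj. Qed.

Lemma mem_act_part t P (B : {set 'I_n}) : (t @: B \in act_part t P) = (B \in P).
Proof. by rewrite act_partE mem_imset //; apply: imset_perm_inj. Qed.

Lemma act_partK t : cancel (act_part t) (act_part t^-1).
Proof.
move=> P; rewrite !act_partE -imset_comp -[RHS]imset_id; apply: eq_imset => B /=.
by rewrite -imset_comp -[RHS]imset_id; apply: eq_imset => x /=; rewrite permK.
Qed.

Lemma act_part_inj t : injective (act_part t).
Proof. exact: can_inj (act_partK t). Qed.

Lemma act_setpart t P : is_setpart (act_part t P) = is_setpart P.
Proof.
rewrite /is_setpart act_partE -[X in partition _ X](imset_perm_setT t).
exact/imset_partition/perm_inj.
Qed.

Lemma act_part_min t : act_part t (part_min n) = part_min n.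
Proof.
rewrite act_partE /part_min -imset_comp (eq_imset _ (imset_set1 t)).
rewrite (imset_comp (@set1 _) t); apply/setP => D.
apply/imsetP/imsetP => [[x _ ->]|[x _ ->]]; first by exists x.
by exists x => //; apply/imsetP; exists (t^-1 x) => //; rewrite permKV.
Qed.

Lemma act_part_max t : act_part t (part_max n) = part_max n.
Proof. by rewrite act_partE /part_max imset_set1 imset_perm_setT. Qed.

Lemma act_proper t P : proper_part (act_part t P) = proper_part P.
Proof.
rewrite /proper_part act_setpart -{1}(act_part_min t) -{1}(act_part_max t).
by rewrite !(inj_eq (@act_part_inj t)).
Qed.

Lemma act_refines t P Q : refines P Q -> refines (act_part t P) (act_part t Q).
Proof.
move=> /forall_inP PQ; apply/forall_inP => D; rewrite act_partE => /imsetP[B BP ->].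
have /exists_inP[C CQ BC] := PQ B BP; apply/exists_inP; exists (t @: C).
  by rewrite mem_act_part.
exact: imsetS.
Qed.

Lemma act_refinesE t P Q : refines (act_part t P) (act_part t Q) = refines P Q.
Proof.
apply/idP/idP; last exact: act_refines.
by move/(act_refines t^-1); rewrite !act_partK.
Qed.

Lemma in_S1Sn1V t : in_S1Sn1 t -> in_S1Sn1 t^-1.
Proof. by move=> t_fix i i0; rewrite -{1}(t_fix i i0) permK. Qed.

Lemma act_V t P : in_S1Sn1 t -> in_V P -> in_V (act_part t P).
Proof.
move=> t_fix [x [y [x0 xy ->]]]; have tx := t_fix x x0.
exists x, (t y); split => //; first by rewrite -{1}tx (inj_eq perm_inj).
rewrite act_partE imsetU imset_set1 -imset_comp (eq_imset _ (imset_set1 t)).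
by rewrite (imset_comp (@set1 _) t) imset_perm_setC !imsetU1 !imset_set1 tx.
Qed.

Lemma act_simplexE t c : act_simplex t c = act_part t @: c.
Proof. by []. Qed.

Lemma mem_act_simplex t c P : (act_part t P \in act_simplex t c) = (P \in c).
Proof. by rewrite act_simplexE mem_imset //; apply: act_part_inj. Qed.

Lemma act_F0 t c : in_S1Sn1 t -> in_F0 c -> in_F0 (act_simplex t c).
Proof.
move=> t_fix [/simplexP[c0 c_prop c_chain] cV]; split.
  apply/simplexP; split; first by rewrite act_simplexE imset_eq0.
    by move=> Q /imsetP[P Pc ->]; rewrite act_proper c_prop.
  by move=> Q R /imsetP[P Pc ->] /imsetP[P' P'c ->]; rewrite !act_refinesE c_chain.
move=> Q /imsetP[P Pc ->] /(act_V (in_S1Sn1V t_fix)); rewrite act_partK; exact: cV.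
Qed.
End Action.

Section Isolation.
Variable x0 : 'I_n.
Hypothesis val_x0 : val x0 = 0.

Definition isolated P := [set x0] \in P.

Definition isolate P : part_t n :=
  [set [set x0]] :|: ([set B :\ x0 | B in P] :\ set0).

Definition alpha : part_t n := [set [set x0]; ~: [set x0]].

Lemma isolated_refines P Q : is_setpart P -> is_setpart Q ->
  refines P Q -> isolated Q -> isolated P.
Proof.
move=> /setpartP[_ Pcov _] /setpartP[_ _ Quniq] /forall_inP PQ Qx0.
have [B BP x0B] := Pcov x0; have /exists_inP[C CQ BC] := PQ B BP.
have CE : C = [set x0] by apply: (Quniq C _ x0) => //; [apply: (subsetP BC) | rewrite inE].
suff BE : B = [set x0] by rewrite /isolated -BE.
by apply/eqP; rewrite eqEsubset -CE BC /= CE sub1set.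
Qed.

Lemma in_isolate P D : D \in isolate P =
  (D == [set x0]) || ((D != set0) && (D \in [set B :\ x0 | B in P])).
Proof. by rewrite !inE. Qed.

Lemma isolated_isolate P : isolated (isolate P).
Proof. by rewrite /isolated in_isolate eqxx. Qed.

Lemma mem_isolate P B : B \in P -> B :\ x0 != set0 -> B :\ x0 \in isolate P.
Proof. by move=> BP B0; rewrite in_isolate B0; apply/orP; right; apply: imset_f. Qed.

Lemma mem_isolate_avoid P C : C \in P -> C != set0 -> x0 \notin C -> C \in isolate P.
Proof.
move=> CP C0 x0C; have CE : C :\ x0 = C by apply/setDidPl; rewrite disjoint_sym disjoints1.
by rewrite -CE mem_isolate ?CE.
Qed.

Lemma isolate_setpart P : is_setpart P -> is_setpart (isolate P).
Proof.
move=> /setpartP[P0 Pcov Puniq]; apply/setpartP; split.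
- rewrite in_isolate eqxx andFb orbF; apply/negP => /eqP/setP/(_ x0).
  by rewrite !inE eqxx.
- move=> x; have [->|xx0] := eqVneq x x0.
    by exists [set x0]; rewrite ?in_isolate ?eqxx ?inE.
  have [B BP xB] := Pcov x; exists (B :\ x0); last by rewrite !inE xx0.
  by apply: mem_isolate => //; apply/set0Pn; exists x; rewrite !inE xx0.
- move=> B C x; rewrite !in_isolate.
  case/orP => [/eqP->|/andP[_ /imsetP[B' B'P ->]]];
  case/orP => [/eqP->|/andP[_ /imsetP[C' C'P ->]]] //.
  + by rewrite inE => /eqP->; rewrite !inE eqxx.
  + by move=> /[swap]; rewrite inE => /eqP->; rewrite !inE eqxx.
  + by move=> /setD1P[_ xB] /setD1P[_ xC]; rewrite (Puniq B' C' x).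
Qed.

Lemma isolate_refines P : is_setpart P -> refines (isolate P) P.
Proof.
move=> /setpartP[_ Pcov _]; apply/forall_inP => D; rewrite in_isolate.
case/orP => [/eqP->|/andP[_ /imsetP[B BP ->]]].
  by have [B BP x0B] := Pcov x0; apply/exists_inP; exists B; rewrite // sub1set.
by apply/exists_inP; exists B => //; apply: subD1set.
Qed.

Lemma refines_isolate P Q : is_setpart Q -> isolated Q ->
  refines Q P -> refines Q (isolate P).
Proof.
move=> /setpartP[Q0 _ Quniq] Qx0 /forall_inP QP; apply/forall_inP => B BQ.
have [x0B|x0B] := boolP (x0 \in B).
  have -> : B = [set x0] by apply: (Quniq B [set x0] x0) => //; rewrite inE.
  by apply/exists_inP; exists [set x0]; rewrite ?in_isolate ?eqxx.
have /exists_inP[C CP BC] := QP B BQ.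
have BC0 : B \subset C :\ x0.
  by apply/subsetP => x xB; rewrite !inE (subsetP BC) // andbT; apply: contraNneq x0B => <-.
apply/exists_inP; exists (C :\ x0) => //.
apply: mem_isolate => //; apply: contraNneq Q0 => C0.
by move: BC0; rewrite C0 subset0 => /eqP <-.
Qed.

Lemma isolated_neq_max P : 1 < n -> isolated P -> P != part_max n.
Proof.
move=> n_gt1; apply: contraTneq => ->; rewrite /isolated inE.
apply: contraL n_gt1 => /eqP x0T; have := cardsT 'I_n.
by rewrite -x0T cards1 card_ord => <-.
Qed.

Lemma inV_notin_isolated P : in_V P -> ~~ isolated P.
Proof.
case=> x [y [xE + ->]]; have -> : x = x0 by apply: val_inj; rewrite xE val_x0.
move=> xy.
rewrite /isolated; apply/negP; case/setU1P.
  by move/setP/(_ y); rewrite !inE eqxx orbT (eq_sym y) (negbTE xy).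
case/imsetP => z; rewrite !inE => /norP[zx _] /set1_inj zE.
by rewrite zE eqxx in zx.
Qed.

Lemma isolated_notin_V P : isolated P -> ~ in_V P.
Proof. by move=> Px0 /inV_notin_isolated; rewrite Px0. Qed.

Lemma isolate_min_inV P : is_setpart P -> ~~ isolated P ->
  isolate P = part_min n -> in_V P.
Proof.
move=> /setpartP[P0 Pcov Puniq] Px0 isoE.
have single B : B \in isolate P -> exists z, B = [set z].
  by rewrite isoE => /imsetP[z _ ->]; exists z.
have [B0 B0P x0B0] := Pcov x0.
have [y B0y] : exists y, B0 :\ x0 = [set y].
  apply/single/mem_isolate => //.
  apply: contra Px0 => /eqP B0x0.
  by rewrite /isolated -[[set x0]]setU0 -B0x0 setD1K.
have B0E : B0 = [set x0; y] by rewrite -(setD1K x0B0) B0y.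
have x0y : x0 != y by have := set11 y; rewrite -B0y !inE eq_sym => /andP[].
have avoid C : C \in P -> x0 \notin C -> exists2 z, C = [set z] & z \notin [set x0; y].
  move=> CP x0C; have C0 : C != set0 by apply: contraNneq P0 => <-.
  have [z CE] := single C (mem_isolate_avoid CP C0 x0C).
  exists z => //; rewrite !inE negb_or; apply/andP; split.
    by apply: contraNneq x0C => <-; rewrite CE inE.
  apply/negP => /eqP zy; have zC : z \in C by rewrite CE set11.
  have zB0 : z \in B0 by rewrite B0E zy !inE eqxx orbT.
  by rewrite (Puniq C B0 z) // x0B0 in x0C.
exists x0, y; split => //; apply/eqP; rewrite eqEsubset; apply/andP; split.
  apply/subsetP => C CP; have [x0C|x0C] := boolP (x0 \in C).
    by rewrite (Puniq C B0 x0) // B0E setU11.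
  have [z -> zxy] := avoid C CP x0C.
  by apply/setU1r/imsetP; exists z; rewrite ?in_setC.
apply/subsetP => C; case/setU1P => [->|/imsetP[z]]; first by rewrite -B0E.
rewrite in_setC => zxy ->.
have [D DP zD] := Pcov z.
have x0D : x0 \notin D.
  by apply: contraNN zxy => x0D; rewrite -B0E -(Puniq D B0 x0).
by have [z' DE _] := avoid D DP x0D; move: zD; rewrite DE inE => /eqP ->; rewrite -DE.
Qed.

Lemma isolate_proper P : 1 < n -> is_setpart P -> ~~ isolated P -> ~ in_V P ->
  proper_part (isolate P).
Proof.
move=> n_gt1 hP Px0 PV; rewrite /proper_part isolate_setpart //.
rewrite isolated_neq_max ?isolated_isolate // andbT.
by apply/eqP => /(isolate_min_inV hP Px0).
Qed.

Lemma isolated_alpha : isolated alpha.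
Proof. by rewrite /isolated !inE eqxx. Qed.

Lemma alpha_isolate_max : 1 < n -> alpha = isolate (part_max n).
Proof.
move=> n_gt1; have C0 : ~: [set x0] != set0.
  by rewrite -card_gt0 cardsC1 card_ord -subn1 subn_gt0.
apply/setP => D; rewrite in_isolate imset_set1 !inE setTD.
by case: (D =P ~: [set x0]) => [->|_]; rewrite ?C0 ?andbF.
Qed.

Lemma alpha_proper : 2 < n -> proper_part alpha.
Proof.
move=> n_gt2; have n_gt1 := ltnW n_gt2.
rewrite alpha_isolate_max //; apply: isolate_proper => //.
- exact/part_max_setpart/ltnW.
- by apply/negP => /(isolated_neq_max n_gt1); rewrite eqxx.
- by move/(inV_neq_max n_gt2); rewrite eqxx.
Qed.

Lemma refines_alpha Q : 1 < n -> is_setpart Q -> isolated Q -> refines Q alpha.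
Proof. by move=> n_gt1 hQ Qx0; rewrite alpha_isolate_max // refines_isolate ?refines_max. Qed.

Definition nonisolated c : simplex_t n := [set P in c | ~~ isolated P].

Definition least (X : simplex_t n) P := (P \in X) && [forall Q in X, refines P Q].

Definition pivot_of (X : simplex_t n) : part_t n :=
  if [pick P | least X P] is Some P then isolate P else alpha.

Definition pivot c := pivot_of (nonisolated c).

Lemma least_unique (X : simplex_t n) P Q : {in X, forall R, is_setpart R} ->
  least X P -> least X Q -> P = Q.
Proof.
move=> X_part /andP[PX /forall_inP P_le] /andP[QX /forall_inP Q_le].
by apply: refines_antisym; rewrite ?X_part ?P_le ?Q_le.
Qed.

Lemma pivot_of_least (X : simplex_t n) P : {in X, forall R, is_setpart R} ->
  least X P -> pivot_of X = isolate P.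
Proof.
move=> X_part XP; rewrite /pivot_of; case: pickP => [Q XQ|/(_ P)]; last by rewrite XP.
by rewrite (least_unique X_part XQ XP).
Qed.

Lemma pivot_of_no_least (X : simplex_t n) : (forall P, ~~ least X P) -> pivot_of X = alpha.
Proof. by rewrite /pivot_of => noleast; case: pickP => // P; rewrite (negbTE (noleast P)). Qed.

Lemma isolated_pivot c : isolated (pivot c).
Proof.
by rewrite /pivot /pivot_of; case: pickP => [P _|_]; rewrite ?isolated_isolate ?isolated_alpha.
Qed.

Lemma nonisolated_subset c d : c \subset d -> nonisolated c \subset nonisolated d.
Proof.
move=> cd; apply/subsetP => P; rewrite !inE => /andP[Pc ->].
by rewrite (subsetP cd).
Qed.

Lemma nonisolated_setU1 c Q : isolated Q -> nonisolated (Q |: c) = nonisolated c.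
Proof.
by move=> Qx0; apply/setP => P; rewrite !inE; case: eqP => [->|]; rewrite ?Qx0 ?andbF.
Qed.

Lemma nonisolated_setD1 c Q : isolated Q -> nonisolated (c :\ Q) = nonisolated c.
Proof.
by move=> Qx0; apply/setP => P; rewrite !inE; case: eqP => [->|]; rewrite ?Qx0 ?andbF.
Qed.

Lemma pivot_setU1 c : pivot (pivot c |: c) = pivot c.
Proof. by rewrite /pivot nonisolated_setU1 // isolated_pivot. Qed.

Lemma pivot_setD1 c : pivot (c :\ pivot c) = pivot c.
Proof. by rewrite /pivot nonisolated_setD1 // isolated_pivot. Qed.

Lemma nonisolated_least c : in_F0 c -> nonisolated c != set0 ->
  exists2 P, least (nonisolated c) P & P \in c.
Proof.
case=> /simplexP[_ _ c_chain] _ c0.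
have chain : {in nonisolated c &, total (@refines n)}.
  by move=> P Q; rewrite !inE => /andP[Pc _] /andP[Qc _]; apply: c_chain.
have [P PX P_le] := exists_least refines_refl refines_trans chain c0.
exists P; first by rewrite /least PX; apply/forall_inP.
by move: PX; rewrite inE => /andP[].
Qed.

Lemma pivot_F0 c : 2 < n -> in_F0 c -> [/\ proper_part (pivot c), ~ in_V (pivot c) &
  forall R, R \in c -> refines R (pivot c) || refines (pivot c) R].
Proof.
move=> n_gt2 F0c; have [/simplexP[_ c_prop c_chain] cV] := F0c.
have c_part : {in c, forall R, is_setpart R} by move=> R /c_prop/proper_setpart.
have X_part : {in nonisolated c, forall R, is_setpart R}.
  by move=> R; rewrite inE => /andP[/c_part].
have [X0|/(nonisolated_least F0c)[P XP Pc]] := eqVneq (nonisolated c) set0.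
  have c_iso R : R \in c -> isolated R.
    by move=> Rc; apply: contraT => Rx0; move/setP: X0 => /(_ R); rewrite !inE Rc Rx0.
  rewrite /pivot X0 pivot_of_no_least => [|Q]; last by rewrite /least inE.
  split; [exact: alpha_proper | exact/isolated_notin_V/isolated_alpha |].
  by move=> R Rc; rewrite refines_alpha ?(ltnW n_gt2) ?c_part ?c_iso.
have := XP; rewrite /least inE => /andP[/andP[_ Px0] /forall_inP P_le].
rewrite /pivot (pivot_of_least X_part XP); split.
- by apply: isolate_proper => //; [exact: ltnW | exact: c_part | exact: cV].
- exact/isolated_notin_V/isolated_isolate.
move=> R Rc; have [Rx0|Rx0] := boolP (isolated R).
  have /orP[RP|PR] := c_chain R P Rc Pc; first by rewrite refines_isolate ?c_part.
  by rewrite (isolated_refines _ _ PR Rx0) ?c_part in Px0.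
have PR : refines P R by apply: P_le; rewrite inE Rc.
by rewrite (refines_trans (isolate_refines (c_part P Pc)) PR) orbT.
Qed.

Lemma F0_setU1_pivot c : 2 < n -> in_F0 c -> in_F0 (pivot c |: c).
Proof.
move=> n_gt2 F0c; have [pc_prop pcV pc_cmp] := pivot_F0 n_gt2 F0c.
have [/simplexP[_ c_prop c_chain] cV] := F0c; split.
  apply/simplexP; split; first by apply/set0Pn; exists (pivot c); rewrite setU11.
    by move=> P /setU1P[->|/c_prop].
  move=> P Q /setU1P[->|Pc] /setU1P[->|Qc]; rewrite ?refines_refl ?pc_cmp //.
    by rewrite orbC pc_cmp.
  exact: c_chain.
by move=> P /setU1P[->|/cV].
Qed.

Lemma covers_setU1_pivot c : 2 < n -> in_F0 c -> pivot c \notin c ->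
  covers_F0 c (pivot c |: c).
Proof.
move=> n_gt2 F0c pc_c; have card_c : #|pivot c |: c| = #|c|.+1 by rewrite cardsU1 pc_c.
split; [done | exact: F0_setU1_pivot | by rewrite properEcard subsetUr card_c ltnSn |].
case=> d [_ /proper_card cd /proper_card]; rewrite card_c.
by rewrite ltnS leqNgt cd.
Qed.

Definition pivot_matching : {set simplex_t n * simplex_t n} :=
  [set p | [&& in_F0b p.1, p.2 == pivot p.1 |: p.1 & pivot p.1 \notin p.1]].

Lemma mem_pivot_matching a b : (a, b) \in pivot_matching <->
  [/\ in_F0 a, b = pivot a |: a & pivot a \notin a].
Proof.
rewrite inE /=; split; first by case/and3P => /in_F0P F0a /eqP -> ->.
by case=> /in_F0P -> -> ->; rewrite eqxx.
Qed.

Lemma pivot_matching_pairE p x : p \in pivot_matching -> x \in [set p.1; p.2] ->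
  p = if pivot x \in x then (x :\ pivot x, x) else (x, pivot x |: x).
Proof.
case: p => a b /mem_pivot_matching[_ -> pa_a]; rewrite !inE /=.
case/orP => /eqP ->; first by rewrite (negbTE pa_a).
by rewrite pivot_setU1 setU11 setU1K.
Qed.

Lemma pivot_matching_matching : 2 < n -> matching_F0 pivot_matching.
Proof.
move=> n_gt2; split.
  by case=> a b /mem_pivot_matching[F0a -> pa_a]; apply: covers_setU1_pivot.
move=> p q pM qM /set0Pn[x]; rewrite inE => /andP[xp xq].
by rewrite (pivot_matching_pairE pM xp) (pivot_matching_pairE qM xq).
Qed.

Lemma pivot_matching_acyclic : acyclic_F0 pivot_matching.
Proof.
case=> s [s2 /allP sM s_uniq s_cyc]; set t := size s in s2 s_uniq s_cyc.
have t_gt0 : 0 < t by apply: leq_trans s2.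
pose a i := (nth (set0, set0) s i).1; pose b i := (nth (set0, set0) s i).2.
have ab i : i < t -> [/\ in_F0 (a i), b i = pivot (a i) |: a i & pivot (a i) \notin a i].
  by move=> it; apply/mem_pivot_matching; rewrite -surjective_pairing sM ?mem_nth.
have succ_lt i : i < t -> i.+1 %% t < t by rewrite ltn_pmod.
have nonisolated_ba i : i < t -> nonisolated (b i) = nonisolated (a i).
  by move=> it; have [_ -> _] := ab i it; rewrite nonisolated_setU1 ?isolated_pivot.
have nonisolatedC : forall i j, i < t -> j < t -> nonisolated (a i) = nonisolated (a j).
  apply: cyclic_subset_eq => i it; rewrite -(nonisolated_ba (i.+1 %% t)) ?succ_lt //.
  exact/nonisolated_subset/proper_sub/(s_cyc i it).
have pivotC i : i < t -> pivot (a i) = pivot (a 0) by move=> it; rewrite /pivot (nonisolatedC i 0).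
have b01 : b 0 = b 1.
  apply: (@cyclic_subset_eq _ _ t) => // i it; have [_ -> _] := ab i it.
  have [_ bE _] := ab _ (succ_lt i it).
  rewrite subUset sub1set (proper_sub (s_cyc i it)) andbT bE.
  by rewrite pivotC // (pivotC _ (succ_lt i it)) setU11.
move/uniqP: s_uniq => /(_ set0 0 1); rewrite !inE size_map => /(_ t_gt0 s2).
by rewrite !(nth_map (set0, set0)) // => /(_ b01).
Qed.

Lemma pivot_set1 Q : isolated Q -> pivot [set Q] = alpha.
Proof.
move=> Qx0; rewrite /pivot -[[set Q]]setU0 nonisolated_setU1 //.
by apply: pivot_of_no_least => P; rewrite /least !inE.
Qed.

Lemma alpha_F0 : 2 < n -> in_F0 [set alpha].
Proof.
move=> n_gt2; split; last by move=> P /set1P ->; apply/isolated_notin_V/isolated_alpha.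
apply/simplexP; split; first by apply/set0Pn; exists alpha; rewrite set11.
  by move=> P /set1P ->; apply: alpha_proper.
by move=> P Q /set1P -> /set1P ->; rewrite refines_refl.
Qed.

Lemma critical_pivot_matching c : critical_F0 pivot_matching c -> c = [set alpha].
Proof.
case=> F0c unmatched.
have pc_c : pivot c \in c.
  apply: contraT => pc_c.
  have cM : (c, pivot c |: c) \in pivot_matching by apply/mem_pivot_matching.
  by case: (unmatched _ cM); rewrite /= eqxx.
have c_pc : c :\ pivot c = set0.
  apply: contraTeq isT => c0.
  have cM : (c :\ pivot c, c) \in pivot_matching.
    apply/mem_pivot_matching; rewrite pivot_setD1 setD1K // setD11; split => //.
    exact: F0_subset F0c (subD1set c (pivot c)) c0.
  by case: (unmatched _ cM); rewrite /= eqxx.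
have cE : c = [set pivot c] by rewrite -{1}(setD1K pc_c) c_pc setU0.
have pcE : pivot c = alpha by rewrite {1}cE pivot_set1 ?isolated_pivot.
by rewrite cE pcE.
Qed.

Lemma alpha_critical : 2 < n -> critical_F0 pivot_matching [set alpha].
Proof.
move=> n_gt2; split; first exact: alpha_F0.
case=> a b pM; have /mem_pivot_matching[F0a _ pa_a] := pM; split => /=.
  by apply: contraNneq pa_a => ->; rewrite pivot_set1 ?isolated_alpha ?set11.
apply/eqP => bE; have := pivot_matching_pairE pM (setU1r a (set11 b)).
rewrite bE pivot_set1 ?isolated_alpha // set11 /= setDv => -[aE].
by case: F0a => /simplexP[a0 _ _] _; rewrite aE eqxx in a0.
Qed.

Section Equivariance.
Local Open Scope group_scope.
Variable t : {perm 'I_n}.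
Hypothesis t_fix : in_S1Sn1 t.

Let tx0 : t x0 = x0. Proof. exact: t_fix. Qed.

Lemma act_isolated P : isolated (act_part t P) = isolated P.
Proof. by rewrite /isolated -{1}tx0 -imset_set1 mem_act_part. Qed.

Lemma act_isolate P : act_part t (isolate P) = isolate (act_part t P).
Proof.
rewrite act_partE /isolate imsetU1 imset_set1 tx0 imsetD1_inj ?imset0; last exact: imset_perm_inj.
congr (_ |: (_ :\ _)); rewrite act_partE -!imset_comp; apply: eq_imset => B /=.
by rewrite imsetD1_inj ?tx0 //; apply: perm_inj.
Qed.

Lemma act_alpha : act_part t alpha = alpha.
Proof. by rewrite act_partE /alpha !imsetU1 !imset_set1 imset_perm_setC imset_set1 tx0. Qed.

Lemma act_nonisolated c : nonisolated (act_simplex t c) = act_simplex t (nonisolated c).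
Proof.
apply/setP => Q; rewrite inE; apply/andP/imsetP.
  by case=> /imsetP[P Pc ->]; rewrite act_isolated => Px0; exists P; rewrite ?inE ?Pc.
by case=> P; rewrite inE => /andP[Pc Px0] ->; rewrite mem_act_simplex act_isolated.
Qed.

Lemma act_least (X : simplex_t n) P : least (act_simplex t X) (act_part t P) = least X P.
Proof.
rewrite /least mem_act_simplex; congr andb; apply/forall_inP/forall_inP => P_le Q QX.
  by rewrite -(act_refinesE t) P_le ?mem_act_simplex.
by case/imsetP: QX => R RX ->; rewrite act_refinesE P_le.
Qed.

Lemma act_pivot_of (X : simplex_t n) : {in X, forall R, is_setpart R} ->
  pivot_of (act_simplex t X) = act_part t (pivot_of X).
Proof.
move=> X_part; have tX_part : {in act_simplex t X, forall R, is_setpart R}.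
  by move=> Q /imsetP[P PX ->]; rewrite act_setpart X_part.
case: (pickP (least X)) => [P XP|noleast].
  rewrite (pivot_of_least X_part XP) (pivot_of_least (P := act_part t P) tX_part) ?act_isolate //.
  by rewrite act_least.
rewrite (@pivot_of_no_least X) => [|P]; last by rewrite noleast.
rewrite act_alpha pivot_of_no_least // => Q.
by rewrite -[Q](act_partK (t^-1)) invgK act_least noleast.
Qed.

Lemma act_pivot c : in_F0 c -> pivot (act_simplex t c) = act_part t (pivot c).
Proof.
case=> /simplexP[_ c_prop _] _; rewrite /pivot act_nonisolated act_pivot_of //.
by move=> P; rewrite inE => /andP[/c_prop/proper_setpart].
Qed.

End Equivariance.

Lemma pivot_matching_equivariant : equivariant_F0 pivot_matching.
Proof.
move=> t t_fix [a b] /mem_pivot_matching[F0a -> pa_a] /=.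
apply/mem_pivot_matching; rewrite act_pivot //; split.
- exact: act_F0.
- by rewrite act_simplexE imsetU1.
- by rewrite mem_act_simplex.
Qed.

End Isolation.
End SetPartitions.

Theorem lemma12 (n : nat) (hn : 3 <= n) :
  exists M : {set simplex_t n * simplex_t n},
    [/\ matching_F0 M, acyclic_F0 M, equivariant_F0 M &
        forall c : simplex_t n, critical_F0 M c <->
          exists P : part_t n, is_alpha P /\ c = [set P]].
Proof.
pose x0 : 'I_n := Ordinal (ltn_trans (isT : 0 < 2) hn).
exists (pivot_matching x0); split.
- exact: pivot_matching_matching.
- exact: pivot_matching_acyclic.
- exact: pivot_matching_equivariant.
move=> c; split => [/critical_pivot_matching ->|[P [[x [x_0 ->]] ->]]].
  by exists (alpha x0); split => //; exists x0.
have -> : x = x0 by apply: val_inj.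
exact: alpha_critical.
Qed.
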